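(* Let $(M,\pi)$ be a partial $H$-module with standard dilation $((\overline M,T_\pi),\varphi)$. The following are equivalent: (i) $\pi:H\to\mathrm{End}_k(M)$ is a morphism of algebras, i.e. $M$ is a (global) $H$-module; (ii) there is a morphism of partial $H$-modules $\overline\varphi:\overline M\to M$ with $\varphi\circ\overline\varphi=\mathrm{id}_{\overline M}$, where $\overline M$ is regarded as a partial $H$-module via its global $H$-action; (iii) $\varphi:M\to\overline M$ is bijective. In this case $\varphi:M\to\overline M$ is an isomorphism of $H$-modules and $T_\pi=\mathrm{id}_{\overline M}$.
   Context: Throughout, $k$ is a field and $H$ is a Hopf algebra over $k$ with bijective antipode $S$ and Sweedler notation $\Delta(h)=h_{(1)}\otimes h_{(2)}$. A partial $H$-module is a vector space $M$ with linear $\pi:H\to\mathrm{End}_k(M)$ satisfying, for all $h,k\in H$: - $\pi(1_H)=\mathrm{id}$; - $\pi(h)\pi(k_{(1)})\pi(S(k_{(2)}))=\pi(hk_{(1)})\pi(S(k_{(2)}))$; - $\pi(h_{(1)})\pi(S(h_{(2)}))\pi(k)=\pi(h_{(1)})\pi(S(h_{(2)})k)$; - $\pi(h)\pi(S(k_{(1)}))\pi(k_{(2)})=\pi(hS(k_{(1)}))\pi(k_{(2)})$; - $\pi(S(h_{(1)}))\pi(h_{(2)})\pi(k)=\pi(S(h_{(1)}))\pi(h_{(2)}k)$. Morphisms are linear maps commuting with all $\pi(h)$. A left $H$-module (action $\triangleright$) is regarded as a partial $H$-module via $\pi(h)(m)=h\triangleright m$. Standard dilation: $\operatorname{Hom}_k(H,M)$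 is a left $H$-module via $(h\triangleright f)(k)=f(kh)$. Set $\varphi(m)(h)=\pi(h)(m)$, $\overline M=H\triangleright\varphi(M)$ (the $H$-submodule generated by $\varphi(M)$), and $T_\pi:\overline M\to\overline M$, $T_\pi(f)=\varphi(f(1_H))$. *)

From HB Require Import structures.
From mathcomp Require Import all_boot all_order all_algebra.
Set Implicit Arguments. Unset Strict Implicit. Unset Printing Implicit Defensive.
Import GRing.Theory.
Local Open Scope ring_scope.

Section Hopf.
Variables (k : fieldType) (H : algType k).

(* The coproduct Delta(h) in H (x) H is represented by a finite list of
   simple tensors [(h1,h2); ...] ; Delta(h) = \sum h1 (x) h2. *)
Definition sw (cop : H -> seq (H * H)) (V : lmodType k) (h : H)
  (b : H -> H -> V) : V := \sum_(p <- cop h) b p.1 p.2.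

Definition bilin (V : lmodType k) (b : H -> H -> V) :=
  (forall a x x' y, b (a *: x + x') y = a *: b x y + b x' y) /\
  (forall a x y y', b x (a *: y + y') = a *: b x y + b x y').

Definition trilin (V : lmodType k) (t : H -> H -> H -> V) :=
  [/\ (forall a x x' y z, t (a *: x + x') y z = a *: t x y z + t x' y z),
      (forall a x y y' z, t x (a *: y + y') z = a *: t x y z + t x y' z) &
      (forall a x y z z', t x y (a *: z + z') = a *: t x y z + t x y z')].

(* Equalities of tensors are expressed through the universal property:
   two elements of H (x) H (resp. H (x) H (x) H) are equal iff every
   bilinear (resp. trilinear) map into every k-vector space agrees on them. *)
Definition is_hopf (cop : H -> seq (H * H)) (eps : H -> k) (S : H -> H) :=
  [/\
      forall (V : lmodType k) (b : H -> H -> V), bilin b ->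
        forall a h g, sw cop (a *: h + g) b = a *: sw cop h b + sw cop g b,
      forall (V : lmodType k) (t : H -> H -> H -> V), trilin t -> forall h,
        sw cop h (fun x y => sw cop x (fun u v => t u v y))
        = sw cop h (fun x y => sw cop y (fun u v => t x u v)),
      forall (V : lmodType k) (b : H -> H -> V), bilin b ->
        (forall g h, sw cop (g * h) b
                    = sw cop g (fun x y => sw cop h (fun u v => b (x * u) (y * v))))
        /\ sw cop 1 b = b 1 1,
      [/\ forall a h g, eps (a *: h + g) = a * eps h + eps g,
          forall g h, eps (g * h) = eps g * eps h,
          eps 1 = 1,
          forall h, sw cop h (fun x y => eps x *: y) = h &
          forall h, sw cop h (fun x y => eps y *: x) = h] &
      [/\ forall a h g, S (a *: h + g) = a *: S h + S g,
          forall h, sw cop h (fun x y => S x * y) = eps h *: 1,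
          forall h, sw cop h (fun x y => x * S y) = eps h *: 1 &
          bijective S]].

Variable (M : lmodType k).

(* pi h is the endomorphism pi(h) of M; operator identities are stated
   pointwise on m : M. *)
Definition is_partial_module (cop : H -> seq (H * H)) (S : H -> H)
  (pi : H -> M -> M) :=
  [/\ forall a h g m, pi (a *: h + g) m = a *: pi h m + pi g m,
      forall h a m m', pi h (a *: m + m') = a *: pi h m + pi h m',
      forall m, pi 1 m = m &
      [/\ forall h g m, pi h (sw cop g (fun x y => pi x (pi (S y) m)))
                    = sw cop g (fun x y => pi (h * x) (pi (S y) m)),
      forall h g m, sw cop h (fun x y => pi x (pi (S y) (pi g m)))
                    = sw cop h (fun x y => pi x (pi (S y * g) m)),
      forall h g m, sw cop g (fun x y => pi h (pi (S x) (pi y m)))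
                    = sw cop g (fun x y => pi (h * S x) (pi y m)) &
      forall h g m, sw cop h (fun x y => pi (S x) (pi y (pi g m)))
                    = sw cop h (fun x y => pi (S x) (pi (y * g) m))]].

(* Standard dilation.  Elements of Hom_k(H, M) are represented as functions
   H -> M (those in Mbar are automatically linear). *)
Definition hact (f : H -> M) (h : H) : H -> M := fun x => f (x * h).
Definition dil_phi (pi : H -> M -> M) (m : M) : H -> M := fun h => pi h m.
(* Mbar = H |> phi(M) = the H-submodule generated by phi(M), i.e. the set of
   finite sums \sum_i h_i |> phi(m_i). *)
Definition in_Mbar (pi : H -> M -> M) (f : H -> M) :=
  exists s : seq (H * M), forall x, f x = \sum_(p <- s) pi (x * p.1) p.2.
Definition T_pi (pi : H -> M -> M) (f : H -> M) : H -> M := dil_phi pi (f 1).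

End Hopf.

From HB Require Import structures.
From mathcomp Require Import all_boot all_order all_algebra.
Import GRing.Theory.
Local Open Scope ring_scope.

(* Only two features of the partial action enter: each pi(h) is linear and
   pi(1) = id.  Since pi(1) = id, phi is injective (evaluate at 1), and when pi is
   global every element f = sum_i h_i |> phi(m_i) of Mbar satisfies
   f(x) = pi(x)(f(1)), so evaluation at 1 splits phi.  Conversely, if phi is
   onto Mbar then h |> phi(m) = phi(m') for some m'; evaluating at 1 gives
   m' = pi(h)(m), and evaluating at g gives pi(gh)(m) = pi(g)(pi(h)(m)). *)

Section StandardDilation.

Variables (k : fieldType) (H : algType k) (M : lmodType k) (pi : H -> M -> M).

Definition global_action := forall g h m, pi (g * h) m = pi g (pi h m).

Definition dilation_retraction (phibar : (H -> M) -> M) :=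
  [/\ forall a f g, in_Mbar pi f -> in_Mbar pi g ->
        phibar (fun x => a *: f x + g x) = a *: phibar f + phibar g,
      forall h f, in_Mbar pi f -> phibar (hact f h) = pi h (phibar f) &
      forall f, in_Mbar pi f -> forall x, dil_phi pi (phibar f) x = f x].

Definition dil_phi_injective :=
  forall m m', (forall x, dil_phi pi m x = dil_phi pi m' x) -> m = m'.

Definition dil_phi_onto_Mbar :=
  forall f, in_Mbar pi f -> exists m, forall x, f x = dil_phi pi m x.

Hypothesis pi_linear : forall h a m m', pi h (a *: m + m') = a *: pi h m + pi h m'.
Hypothesis pi1 : forall m, pi 1 m = m.

Lemma piD h m m' : pi h (m + m') = pi h m + pi h m'.
Proof. by have := pi_linear h 1 m m'; rewrite !scale1r. Qed.

Lemma pi0 h : pi h 0 = 0.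
Proof. by apply: (@addIr _ (pi h 0)); rewrite -piD !add0r. Qed.

Lemma in_Mbar_hact_dil_phi h m : in_Mbar pi (hact (dil_phi pi m) h).
Proof. by exists [:: (h, m)] => x; rewrite big_seq1. Qed.

Lemma dil_phi_injectiveP : dil_phi_injective.
Proof. by move=> m m' /(_ 1); rewrite /dil_phi !pi1. Qed.

Section Global.

Hypothesis pi_global : global_action.

Lemma in_Mbar_dil_phi1 f : in_Mbar pi f -> forall x, f x = dil_phi pi (f 1) x.
Proof.
move=> [s f_def] x; rewrite /dil_phi !f_def.
elim: s {f_def} => [|p s IHs]; first by rewrite !big_nil pi0.
by rewrite !big_cons IHs piD mul1r pi_global.
Qed.

Lemma eval1_dilation_retraction : dilation_retraction (fun f => f 1).
Proof.
split=> // [h f f_Mbar | f f_Mbar x]; last by rewrite -in_Mbar_dil_phi1.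
by rewrite /hact mul1r; exact: in_Mbar_dil_phi1.
Qed.

Lemma dil_phi_hact h m x : dil_phi pi (pi h m) x = hact (dil_phi pi m) h x.
Proof. by rewrite /dil_phi /hact pi_global. Qed.

Lemma T_pi_id f : in_Mbar pi f -> forall x, T_pi pi f x = f x.
Proof. by move=> f_Mbar x; rewrite /T_pi -in_Mbar_dil_phi1. Qed.

End Global.

Lemma dilation_retraction_onto phibar :
  dilation_retraction phibar -> dil_phi_onto_Mbar.
Proof. by case=> _ _ phibarK f f_Mbar; exists (phibar f) => x; rewrite phibarK. Qed.

Lemma dil_phi_onto_global : dil_phi_onto_Mbar -> global_action.
Proof.
move=> onto g h m; have [m' hact_m'] := onto _ (in_Mbar_hact_dil_phi h m).
have := hact_m' 1; rewrite /hact /dil_phi mul1r pi1 => ->.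
by have := hact_m' g.
Qed.

End StandardDilation.

Theorem mainTheorem12 (k : fieldType) (H : algType k)
  (cop : H -> seq (H * H)) (eps : H -> k) (S : H -> H)
  (hH : is_hopf cop eps S)
  (M : lmodType k) (pi : H -> M -> M) (hpi : is_partial_module cop S pi) :
  let glob := forall g h m, pi (g * h) m = pi g (pi h m) in
  let dilmor := exists phibar : (H -> M) -> M,
      [/\ forall a f g, in_Mbar pi f -> in_Mbar pi g ->
            phibar (fun x => a *: f x + g x) = a *: phibar f + phibar g,
          forall h f, in_Mbar pi f -> phibar (hact f h) = pi h (phibar f) &
          forall f, in_Mbar pi f -> forall x, dil_phi pi (phibar f) x = f x] in
  let phibij :=
      (forall m m', (forall x, dil_phi pi m x = dil_phi pi m' x) -> m = m') /\
      (forall f, in_Mbar pi f -> exists m, forall x, f x = dil_phi pi m x) in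
  [/\ glob <-> dilmor,
      dilmor <-> phibij &
      glob ->
        [/\ phibij,
            forall a m m' x, dil_phi pi (a *: m + m') x
                             = a *: dil_phi pi m x + dil_phi pi m' x,
            forall h m x, dil_phi pi (pi h m) x = hact (dil_phi pi m) h x &
            forall f, in_Mbar pi f -> forall x, T_pi pi f x = f x]].
Proof.
case: hpi => _ pi_linear pi1 _ glob dilmor phibij.
have glob_dilmor : glob -> dilmor.
  by move=> pi_global; exists (fun f => f 1); exact: eval1_dilation_retraction.
have dilmor_phibij : dilmor -> phibij.
  by case=> phibar /dilation_retraction_onto onto; split=> //; exact: dil_phi_injectiveP.
have phibij_glob : phibij -> glob by case=> _; exact: dil_phi_onto_global.
split; [split=> // | split=> // | move=> pi_global; split].
- by move/dilmor_phibij/phibij_glob.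
- by move/phibij_glob/glob_dilmor.
- exact/dilmor_phibij/glob_dilmor.
- by move=> a m m' x; exact: pi_linear.
- exact: dil_phi_hact.
- exact: T_pi_id.
Qed.
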